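(* Let $D:\mathbb R^2\setminus\{0\}\to\mathbb R$ be nonnegative, bounded and continuously differentiable, and consider $\ddot x+D(x)\dot x=-x/|x|^3$. Let $r_B,T>0$ and let $x_n:[-T,0]\to\mathbb R^2\setminus\{0\}$ be solutions with $r_n(0)=r_B$ and $\dot r_n(0)\to-\infty$, where $r_n=|x_n|$. Then $\dot r_n(t)\to-\infty$ as $n\to+\infty$, uniformly with respect to $t\in[-T,0]$. *)

From Stdlib Require Export Reals.
From Coquelicot Require Export Coquelicot.
Open Scope R_scope.

Definition norm2 (a b : R) : R := sqrt (a * a + b * b).

Definition C1_punctured (D : R -> R -> R) : Prop :=
  exists Dx Dy : R -> R -> R,
    forall a b : R, (a, b) <> (0, 0) ->
      differentiable_pt_lim D a b (Dx a b) (Dy a b) /\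
      continuity_2d_pt Dx a b /\ continuity_2d_pt Dy a b.

Definition cont_within (T : R) (f : R -> R) (t : R) : Prop :=
  filterlim f (within (fun s => -T <= s <= 0) (locally t)) (locally (f t)).

(* (x1,x2) : [-T,0] -> R^2\{0} is a (C^2) solution of
     x'' + D(x) x' = - x / |x|^3
   with velocity (v1,v2): x, x' continuous on the closed interval [-T,0],
   x' is the derivative of x and the equation holds on (-T,0). *)
Definition is_solution (D : R -> R -> R) (T : R) (x1 x2 v1 v2 : R -> R) : Prop :=
  (forall t, -T <= t <= 0 -> (x1 t, x2 t) <> (0, 0)) /\
  (forall t, -T <= t <= 0 ->
     cont_within T x1 t /\ cont_within T x2 t /\
     cont_within T v1 t /\ cont_within T v2 t) /\
  (forall t, -T < t < 0 ->
     is_derive x1 t (v1 t) /\ is_derive x2 t (v2 t) /\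
     is_derive v1 t (- D (x1 t) (x2 t) * v1 t - x1 t / (norm2 (x1 t) (x2 t)) ^ 3) /\
     is_derive v2 t (- D (x1 t) (x2 t) * v2 t - x2 t / (norm2 (x1 t) (x2 t)) ^ 3)).

(* radial velocity r'(t) = (x . x') / |x|, the derivative of r = |x|
   (at the endpoint t = 0 it is the one-sided derivative / continuous
   extension, since x' is continuous on [-T,0]). *)
Definition rdot (x1 x2 v1 v2 : R -> R) (t : R) : R :=
  (x1 t * v1 t + x2 t * v2 t) / norm2 (x1 t) (x2 t).

From Stdlib Require Import Lra.

(* Along a solution, the radial velocity u = r' satisfies
   r'' = (|x'|^2 - r'^2)/r - D(x) r' - 1/r^2.
   While r' < 0 on [t, 0], r decreases there, so r >= r(0) = r_B on [t, 0];
   as D >= 0 and |x'| >= |r'|, this gives r'' >= -1/r_B^2 and, integrating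
   backwards, r'(t) <= r'(0) + T/r_B^2.  Once r'(0) + T/r_B^2 < 0, a
   continuity argument shows that r' < 0 persists on the whole of [-T, 0]. *)

Definition continuous_on_interval (a b : R) (f : R -> R) : Prop :=
  forall t, a <= t <= b ->
    filterlim f (within (fun s => a <= s <= b) (locally t)) (locally (f t)).

Lemma continuous_on_subinterval (a b a' b' : R) (f : R -> R) :
  a <= a' -> b' <= b ->
  continuous_on_interval a b f -> continuous_on_interval a' b' f.
Proof.
  intros Ha Hb Hf t Ht. unfold filterlim, filter_le, filtermap, within.
  intros P HP.
  apply (filter_imp (fun s => a <= s <= b -> P (f s))).
  - intros s HPs Hs. apply HPs. lra.
  - apply (Hf t ltac:(lra) P HP).
Qed.

Section FilterlimArith.
Context {T0 : Type} (F : (T0 -> Prop) -> Prop) {FF : Filter F}.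

Lemma filterlim_plus_fun (f g : T0 -> R) (a b : R) :
  filterlim f F (locally a) -> filterlim g F (locally b) ->
  filterlim (fun t => f t + g t) F (locally (a + b)).
Proof.
  intros Hf Hg. eapply filterlim_comp_2; [exact Hf | exact Hg |].
  exact (filterlim_plus a b).
Qed.

Lemma filterlim_mult_fun (f g : T0 -> R) (a b : R) :
  filterlim f F (locally a) -> filterlim g F (locally b) ->
  filterlim (fun t => f t * g t) F (locally (a * b)).
Proof.
  intros Hf Hg. eapply filterlim_comp_2; [exact Hf | exact Hg |].
  exact (filterlim_mult a b).
Qed.

End FilterlimArith.

Definition clamp (a b t : R) : R := Rmax a (Rmin b t).

Lemma clamp_in (a b t : R) : a <= b -> a <= clamp a b t <= b.
Proof. intros; unfold clamp, Rmax, Rmin; repeat destruct Rle_dec; lra. Qed.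

Lemma clamp_id (a b t : R) : a <= t <= b -> clamp a b t = t.
Proof. intros; unfold clamp, Rmax, Rmin; repeat destruct Rle_dec; lra. Qed.

Lemma clamp_lipschitz (a b t s : R) :
  a <= b -> Rabs (clamp a b t - clamp a b s) <= Rabs (t - s).
Proof.
  intros; unfold clamp, Rmax, Rmin; repeat destruct Rle_dec;
  unfold Rabs; repeat destruct Rcase_abs; lra.
Qed.

(* Extending f by constants outside [a, b] turns continuity within [a, b]
   into plain continuity, as [MVT_gen] requires. *)
Lemma continuity_pt_clamp_comp (a b : R) (f : R -> R) (t : R) :
  a <= b -> continuous_on_interval a b f ->
  continuity_pt (fun s => f (clamp a b s)) t.
Proof.
  intros Hab Hf. apply continuity_pt_filterlim.
  eapply filterlim_comp with
    (G := within (fun s => a <= s <= b) (locally (clamp a b t))).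
  - intros P [eps HP]. exists eps. intros s Hs. apply HP.
    + change (Rabs (clamp a b s - clamp a b t) < eps).
      eapply Rle_lt_trans; [apply clamp_lipschitz; lra | exact Hs].
    + now apply clamp_in.
  - apply Hf. now apply clamp_in.
Qed.

Lemma mvt_within (f df : R -> R) (a b : R) : a < b ->
  (forall t, a < t < b -> is_derive f t (df t)) ->
  continuous_on_interval a b f ->
  exists c, a <= c <= b /\ f b - f a = df c * (b - a).
Proof.
  intros Hab Hd Hc.
  destruct (MVT_gen (fun s => f (clamp a b s)) a b df) as [c [Hcab Hinc]].
  - rewrite Rmin_left, Rmax_right by lra. intros t Ht.
    apply is_derive_ext_loc with f; [| now apply Hd].
    assert (He : 0 < Rmin (t - a) (b - t)) by (apply Rmin_pos; lra).
    exists (mkposreal _ He). intros s Hs.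
    change (Rabs (s - t) < Rmin (t - a) (b - t)) in Hs.
    pose proof (Rmin_l (t - a) (b - t)); pose proof (Rmin_r (t - a) (b - t)).
    apply Rabs_def2 in Hs. rewrite clamp_id; [reflexivity | lra].
  - intros t _. apply continuity_pt_clamp_comp; [lra | exact Hc].
  - rewrite Rmin_left, Rmax_right in Hcab by lra.
    rewrite !clamp_id in Hinc by lra. now exists c.
Qed.

(* The derivative is only known inside (a, b); replacing it by [Rmax L df]
   (resp. [Rmin U df]) makes the bound hold at the endpoints as well. *)
Lemma increment_ge_of_derive_ge (f df : R -> R) (a b L : R) : a < b ->
  (forall t, a < t < b -> is_derive f t (df t) /\ L <= df t) ->
  continuous_on_interval a b f ->
  L * (b - a) <= f b - f a.
Proof.
  intros Hab Hd Hc.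
  destruct (mvt_within f (fun t => Rmax L (df t)) a b Hab) as [c [_ ->]];
    [| exact Hc |].
  - intros t Ht. destruct (Hd t Ht) as [Hdt HL].
    now rewrite Rmax_right.
  - apply Rmult_le_compat_r; [lra | apply Rmax_l].
Qed.

Lemma increment_le_of_derive_le (f df : R -> R) (a b U : R) : a < b ->
  (forall t, a < t < b -> is_derive f t (df t) /\ df t <= U) ->
  continuous_on_interval a b f ->
  f b - f a <= U * (b - a).
Proof.
  intros Hab Hd Hc.
  destruct (mvt_within f (fun t => Rmin U (df t)) a b Hab) as [c [_ ->]];
    [| exact Hc |].
  - intros t Ht. destruct (Hd t Ht) as [Hdt HU].
    now rewrite Rmin_right.
  - apply Rmult_le_compat_r; [lra | apply Rmin_l].
Qed.

(* Real induction from the right end: the supremum of the points where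
   [f < k] fails would violate the induction step. *)
Lemma lt_on_interval_backward (f : R -> R) (a b k : R) :
  continuous_on_interval a b f -> f b < k ->
  (forall m, a <= m < b -> (forall s, m < s <= b -> f s < k) -> f m < k) ->
  forall t, a <= t <= b -> f t < k.
Proof.
  intros Hc Hb Hstep t Ht.
  destruct (Rlt_or_le (f t) k) as [| Hft]; [assumption | exfalso].
  pose (E s := a <= s <= b /\ k <= f s).
  destruct (completeness E) as [m [Hub Hlub]].
  { exists b. now intros s [Hs _]. }
  { now exists t. }
  assert (Htm : t <= m) by (apply Hub; now split).
  assert (Hmb : m <= b) by (apply Hlub; now intros s [Hs _]).
  assert (Hfm : k <= f m).
  { destruct (Rlt_or_le (f m) k) as [Hlt |]; [exfalso | assumption].
    assert (Hnear : locally (f m) (fun y => y < k)).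
    { assert (He : 0 < k - f m) by lra.
      exists (mkposreal _ He). intros y Hy.
      change (Rabs (y - f m) < k - f m) in Hy. apply Rabs_def2 in Hy. lra. }
    destruct (Hc m ltac:(lra) _ Hnear) as [eps Heps].
    pose proof (cond_pos eps).
    assert (m <= m - eps / 2); [| lra].
    apply Hlub. intros s [Hs Hks].
    destruct (Rle_or_lt s (m - eps / 2)) as [| Hlt2]; [assumption | exfalso].
    assert (s <= m) by (apply Hub; now split).
    assert (f s < k); [| lra].
    apply Heps; [| exact Hs].
    change (Rabs (s - m) < eps). apply Rabs_def1; lra. }
  assert (Hmb' : m < b) by (destruct (Req_dec m b); subst; lra).
  assert (f m < k); [| lra].
  apply Hstep; [lra |].
  intros s Hs. destruct (Rlt_or_le (f s) k) as [| Hks]; [assumption |].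
  assert (s <= m) by (apply Hub; split; [lra | exact Hks]). lra.
Qed.

Lemma is_derive_dot (f1 f2 g1 g2 : R -> R) (t df1 df2 dg1 dg2 : R) :
  is_derive f1 t df1 -> is_derive f2 t df2 ->
  is_derive g1 t dg1 -> is_derive g2 t dg2 ->
  is_derive (fun s => f1 s * g1 s + f2 s * g2 s) t
    (df1 * g1 t + f1 t * dg1 + (df2 * g2 t + f2 t * dg2)).
Proof.
  intros Hf1 Hf2 Hg1 Hg2.
  exact (is_derive_plus _ _ t _ _
           (is_derive_mult f1 g1 t _ _ Hf1 Hg1 Rmult_comm)
           (is_derive_mult f2 g2 t _ _ Hf2 Hg2 Rmult_comm)).
Qed.

Lemma sqnorm_pos (a b : R) : (a, b) <> (0, 0) -> 0 < a * a + b * b.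
Proof.
  intros H. destruct (Req_dec a 0), (Req_dec b 0); subst;
    [now elim H | nra | nra | nra].
Qed.

Section RadialMotion.
Variables (D : R -> R -> R) (T : R) (x1 x2 v1 v2 : R -> R).
Hypothesis HDnn : forall a b, (a, b) <> (0, 0) -> 0 <= D a b.
Hypothesis Hsol : is_solution D T x1 x2 v1 v2.

Let radius_sq t := x1 t * x1 t + x2 t * x2 t.
Let r t := norm2 (x1 t) (x2 t).
Let u := rdot x1 x2 v1 v2.

Let radial_accel t :=
  (v1 t * v1 t + v2 t * v2 t - u t * u t) / r t
  - D (x1 t) (x2 t) * u t - / (r t * r t).

Lemma radius_sq_pos t : -T <= t <= 0 -> 0 < radius_sq t.
Proof. intros Ht. apply sqnorm_pos, (proj1 Hsol), Ht. Qed.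

Lemma radius_pos t : -T <= t <= 0 -> 0 < r t.
Proof. intros Ht. apply sqrt_lt_R0, radius_sq_pos, Ht. Qed.

Lemma radius_mul_self t : -T <= t <= 0 -> r t * r t = radius_sq t.
Proof. intros Ht. apply sqrt_sqrt. pose proof (radius_sq_pos t Ht). lra. Qed.

Lemma radius_continuous : continuous_on_interval (-T) 0 r.
Proof.
  intros t Ht. destruct (proj1 (proj2 Hsol) t Ht) as [c1 [c2 _]].
  apply (filterlim_comp _ _ _ radius_sq sqrt _ (locally (radius_sq t)));
    [| apply continuous_sqrt].
  apply filterlim_plus_fun; [apply _ | |]; apply filterlim_mult_fun; auto; apply _.
Qed.

Lemma rdot_continuous : continuous_on_interval (-T) 0 u.
Proof.
  intros t Ht. destruct (proj1 (proj2 Hsol) t Ht) as [c1 [c2 [c3 c4]]].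
  apply filterlim_mult_fun; [apply _ | |].
  - apply filterlim_plus_fun; [apply _ | |]; apply filterlim_mult_fun; auto; apply _.
  - apply (filterlim_comp _ _ _ r Rinv _ (locally (r t))); [now apply radius_continuous |].
    apply continuous_Rinv. pose proof (radius_pos t Ht). lra.
Qed.

Lemma is_derive_radius t : -T < t < 0 -> is_derive r t (u t).
Proof.
  intros Ht. destruct (proj2 (proj2 Hsol) t Ht) as [d1 [d2 _]].
  pose proof (is_derive_dot x1 x2 x1 x2 t _ _ _ _ d1 d2 d1 d2) as Hsq.
  pose proof (is_derive_sqrt radius_sq t _ Hsq (radius_sq_pos t ltac:(lra))) as Hr.
  change (sqrt (radius_sq t)) with (r t) in Hr.
  pose proof (radius_pos t ltac:(lra)).
  replace (u t) with
    ((v1 t * x1 t + x1 t * v1 t + (v2 t * x2 t + x2 t * v2 t)) / (2 * r t));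
    [exact Hr |].
  unfold u, rdot. change (norm2 (x1 t) (x2 t)) with (r t). field. lra.
Qed.

Lemma is_derive_rdot t : -T < t < 0 -> is_derive u t (radial_accel t).
Proof.
  intros Ht. destruct (proj2 (proj2 Hsol) t Ht) as [d1 [d2 [d3 d4]]].
  pose proof (is_derive_dot x1 x2 v1 v2 t _ _ _ _ d1 d2 d3 d4) as Hp.
  pose proof (is_derive_div _ r t _ _ Hp (is_derive_radius t Ht)) as Hu.
  pose proof (radius_pos t ltac:(lra)) as Hr.
  pose proof (radius_mul_self t ltac:(lra)) as Hrr.
  replace (radial_accel t) with
    (((v1 t * v1 t + x1 t * (- D (x1 t) (x2 t) * v1 t - x1 t / r t ^ 3)
       + (v2 t * v2 t + x2 t * (- D (x1 t) (x2 t) * v2 t - x2 t / r t ^ 3))) * r t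
      - (x1 t * v1 t + x2 t * v2 t) * u t) / r t ^ 2);
    [apply (Hu ltac:(lra)) |].
  unfold radial_accel, u, rdot. change (norm2 (x1 t) (x2 t)) with (r t).
  replace (/ (r t * r t)) with (radius_sq t / (r t * r t * r t * r t))
    by (rewrite <- Hrr; field; lra).
  unfold radius_sq. field. lra.
Qed.

Lemma rdot_sq_le_speed_sq t : -T <= t <= 0 ->
  u t * u t <= v1 t * v1 t + v2 t * v2 t.
Proof.
  intros Ht. pose proof (radius_pos t Ht) as Hr.
  apply Rmult_le_reg_r with (r t * r t); [nra |].
  replace (u t * u t * (r t * r t)) with
    ((x1 t * v1 t + x2 t * v2 t) * (x1 t * v1 t + x2 t * v2 t))
    by (unfold u, rdot; change (norm2 (x1 t) (x2 t)) with (r t); field; lra).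
  rewrite radius_mul_self by exact Ht. unfold radius_sq.
  pose proof (Rle_0_sqr (x1 t * v2 t - x2 t * v1 t)). unfold Rsqr in *. nra.
Qed.

Lemma radial_accel_ge t : -T < t < 0 -> u t <= 0 ->
  - / (r t * r t) <= radial_accel t.
Proof.
  intros Ht Hu. unfold radial_accel.
  pose proof (rdot_sq_le_speed_sq t ltac:(lra)).
  assert (0 <= (v1 t * v1 t + v2 t * v2 t - u t * u t) / r t).
  { apply Rdiv_le_0_compat; [lra | apply radius_pos; lra]. }
  assert (0 <= D (x1 t) (x2 t)) by (apply HDnn, (proj1 Hsol); lra).
  nra.
Qed.

Lemma radius_ge_of_rdot_neg s : -T <= s <= 0 ->
  (forall e, s < e < 0 -> u e < 0) -> r 0 <= r s.
Proof.
  intros Hs Hneg. destruct (Req_dec s 0) as [-> | Hs0]; [lra |].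
  assert (Hinc : r 0 - r s <= 0 * (0 - s)).
  { apply (increment_le_of_derive_le r u); [lra | |].
    - intros e He. split; [apply is_derive_radius; lra | left; now apply Hneg].
    - apply (continuous_on_subinterval (-T) 0); [lra | lra | exact radius_continuous]. }
  lra.
Qed.

Lemma rdot_backward_bound m : -T <= m <= 0 ->
  (forall s, m < s <= 0 -> u s < 0) ->
  u m <= u 0 + (- m) / (r 0 * r 0).
Proof.
  intros Hm Hneg.
  pose proof (radius_pos 0 ltac:(lra)) as Hr0.
  destruct (Req_dec m 0) as [-> | Hm0].
  { unfold Rdiv. rewrite Ropp_0, Rmult_0_l. lra. }
  assert (Hinc : - / (r 0 * r 0) * (0 - m) <= u 0 - u m).
  { apply (increment_ge_of_derive_ge u radial_accel); [lra | |].
    - intros e He. split; [apply is_derive_rdot; lra |].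
      assert (Hre : r 0 <= r e).
      { apply radius_ge_of_rdot_neg; [lra |]. intros s Hs. apply Hneg. lra. }
      assert (/ (r e * r e) <= / (r 0 * r 0)) by (apply Rinv_le_contravar; nra).
      pose proof (radial_accel_ge e ltac:(lra) ltac:(left; apply Hneg; lra)).
      lra.
    - apply (continuous_on_subinterval (-T) 0); [lra | lra | exact rdot_continuous]. }
  unfold Rdiv. lra.
Qed.

Lemma rdot_uniform_bound : u 0 + T / (r 0 * r 0) < 0 ->
  forall t, -T <= t <= 0 -> u t <= u 0 + T / (r 0 * r 0).
Proof.
  intros Hc t Ht.
  pose proof (radius_pos 0 ltac:(lra)) as Hr0.
  assert (Hdrift : forall m, -T <= m <= 0 -> (- m) / (r 0 * r 0) <= T / (r 0 * r 0)).
  { intros m Hm. apply Rmult_le_compat_r; [left; apply Rinv_0_lt_compat; nra | lra]. }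
  assert (Hslack : 0 <= T / (r 0 * r 0)) by (apply Rdiv_le_0_compat; nra).
  assert (Hneg : forall t, -T <= t <= 0 -> u t < 0).
  { apply (lt_on_interval_backward u (-T) 0 0 rdot_continuous).
    - lra.
    - intros m Hm Hafter.
      pose proof (rdot_backward_bound m ltac:(lra) Hafter).
      pose proof (Hdrift m ltac:(lra)). lra. }
  pose proof (rdot_backward_bound t Ht ltac:(intros s Hs; apply Hneg; lra)).
  pose proof (Hdrift t Ht). lra.
Qed.

End RadialMotion.

Theorem lemma7p1 (D : R -> R -> R)
  (HDnn : forall a b, (a, b) <> (0, 0) -> 0 <= D a b)
  (HDbd : exists K, forall a b, (a, b) <> (0, 0) -> Rabs (D a b) <= K)
  (HDC1 : C1_punctured D)
  (rB T : R) (HrB : 0 < rB) (HT : 0 < T)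
  (x1 x2 v1 v2 : nat -> R -> R)
  (Hsol : forall n, is_solution D T (x1 n) (x2 n) (v1 n) (v2 n))
  (Hr0 : forall n, norm2 (x1 n 0) (x2 n 0) = rB)
  (Hlim : is_lim_seq (fun n => rdot (x1 n) (x2 n) (v1 n) (v2 n) 0) m_infty) :
  forall M : R, exists N : nat, forall n : nat, (N <= n)%nat ->
    forall t : R, -T <= t <= 0 -> rdot (x1 n) (x2 n) (v1 n) (v2 n) t <= - M.
Proof.
  intros M.
  apply is_lim_seq_spec in Hlim.
  destruct (Hlim (- Rabs M - 1 - T / (rB * rB))) as [N HN].
  exists N. intros n Hn t Ht.
  pose proof (HN n Hn) as Hu0.
  pose proof (rdot_uniform_bound D T (x1 n) (x2 n) (v1 n) (v2 n) HDnn (Hsol n)) as Hbound.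
  cbv beta in Hbound. rewrite Hr0 in Hbound.
  pose proof (Rle_abs M). pose proof (Rabs_pos M).
  pose proof (Hbound ltac:(lra) t Ht).
  lra.
Qed.
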